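(* Let $x,y:\mathbb{Z}\to\mathbb{R}$ be the coordinates of the vertices of a polygon indexed by $u\in\mathbb{Z}$, let $X+ih_1$, $Y+ih_2$ be their discrete analytic extensions, $h=(h_1,h_2)$, $P=(X,Y)$, and let $F:\mathbb{Z}^2\to\mathbb{R}$ satisfy $F(u+1,v)-F(u,v)=-[h(u+\tfrac12,v-\tfrac12),h(u+\tfrac12,v+\tfrac12)]$ and $F(u,v+1)-F(u,v)=[h(u-\tfrac12,v+\tfrac12),h(u+\tfrac12,v+\tfrac12)]$. For $(u,v)\in\mathbb{Z}^2$ let $v_1=P(u+1,v)-P(u,v)$, $v_2=P(u,v+1)-P(u,v)$, $v_3=P(u-1,v)-P(u,v)$, $v_4=P(u,v-1)-P(u,v)$, and let $A(u,v)=[v_3,v_2]+[v_1,v_4]$ (the area of the quadrangle with vertices $P(u+1,v),P(u,v+1),P(u-1,v),P(u,v-1)$). Then $$F(u+1,v)+F(u,v+1)+F(u-1,v)+F(u,v-1)-4F(u,v)=A(u,v).$$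
   Context: $[X,Y]$ is the $2\times2$ determinant with columns $X,Y$. With $(\mathbb{Z}^2)^*=(\mathbb{Z}+\tfrac12)^2$, functions $g:\mathbb{Z}^2\to\mathbb{R}$, $k:(\mathbb{Z}^2)^*\to\mathbb{R}$ form a discrete analytic function $g+ik$ if $g(u+1,v)-g(u,v)=k(u+\tfrac12,v+\tfrac12)-k(u+\tfrac12,v-\tfrac12)$ and $g(u,v+1)-g(u,v)=-(k(u+\tfrac12,v+\tfrac12)-k(u-\tfrac12,v+\tfrac12))$ for all $(u,v)$. The discrete analytic extension of $x$ is the unique $X+ih_1$ with $X(u,0)=x(u)$ and $h_1(u+\tfrac12,\tfrac12)=-h_1(u+\tfrac12,-\tfrac12)$; likewise $Y+ih_2$ for $y$. *)

From Stdlib Require Import Reals ZArith.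
Open Scope R_scope.

(* Convention: a function on the dual lattice (Z^2)^* = (Z+1/2)^2 is
   represented by  k : Z -> Z -> R  where  k a b  is the value at
   (a + 1/2, b + 1/2). *)

Definition det2 (X Y : R * R) : R := fst X * snd Y - snd X * fst Y.

Definition discrete_analytic (g : Z -> Z -> R) (k : Z -> Z -> R) : Prop :=
  (forall u v : Z, g (u + 1)%Z v - g u v = k u v - k u (v - 1)%Z) /\
  (forall u v : Z, g u (v + 1)%Z - g u v = - (k u v - k (u - 1)%Z v)).

Definition discrete_analytic_extension (x : Z -> R) (g k : Z -> Z -> R) : Prop :=
  discrete_analytic g k /\
  (forall u : Z, g u 0%Z = x u) /\
  (forall u : Z, k u 0%Z = - k u (-1)%Z).

(* Around a vertex (u,v) of Z^2 the four dual points carry the values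
   a = h(u+1/2,v+1/2), b = h(u-1/2,v+1/2), c = h(u-1/2,v-1/2), d = h(u+1/2,v-1/2).
   The Cauchy-Riemann equations make each edge of the quadrangle spanned by the
   four neighbours of P(u,v) a difference of two of these values (v1 = a - d,
   v2 = b - a, v3 = c - b, v4 = d - c), while the defining equations of F
   write its discrete Laplacian at (u,v) as an alternating sum of determinants
   [d,a], [b,a], [c,b], [c,d].  The theorem is then a bilinear identity in a, b, c, d. *)

From Stdlib Require Import Reals ZArith Lra.
Open Scope R_scope.

Definition vsub (p q : R * R) : R * R := (fst p - fst q, snd p - snd q).

Definition pair_field (f g : Z -> Z -> R) (a b : Z) : R * R := (f a b, g a b).

Lemma det2_quadrangle (a b c d : R * R) :
  det2 (vsub c b) (vsub b a) + det2 (vsub a d) (vsub d c) =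
  - det2 d a + det2 b a + det2 c b - det2 c d.
Proof.
  destruct a, b, c, d; unfold det2, vsub; simpl; ring.
Qed.

Section DiscreteAnalyticPair.

Context {X h1 Y h2 : Z -> Z -> R}.
Hypothesis hX : discrete_analytic X h1.
Hypothesis hY : discrete_analytic Y h2.

Let P := pair_field X Y.
Let h := pair_field h1 h2.

Lemma edge_right (u v : Z) :
  vsub (P (u + 1) v) (P u v) = vsub (h u v) (h u (v - 1)).
Proof.
  destruct hX as [hX1 _], hY as [hY1 _].
  unfold vsub, P, h, pair_field; simpl; now rewrite hX1, hY1.
Qed.

Lemma edge_up (u v : Z) :
  vsub (P u (v + 1)) (P u v) = vsub (h (u - 1) v) (h u v).
Proof.
  destruct hX as [_ hX2], hY as [_ hY2].
  unfold vsub, P, h, pair_field; simpl; rewrite hX2, hY2; f_equal; ring.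
Qed.

Lemma edge_left (u v : Z) :
  vsub (P (u - 1) v) (P u v) = vsub (h (u - 1) (v - 1)) (h (u - 1) v).
Proof.
  pose proof (edge_right (u - 1) v) as E.
  replace (u - 1 + 1)%Z with u in E by ring.
  unfold vsub, P, h, pair_field in *; simpl; injection E as E1 E2; f_equal; lra.
Qed.

Lemma edge_down (u v : Z) :
  vsub (P u (v - 1)) (P u v) = vsub (h u (v - 1)) (h (u - 1) (v - 1)).
Proof.
  pose proof (edge_up u (v - 1)) as E.
  replace (v - 1 + 1)%Z with v in E by ring.
  unfold vsub, P, h, pair_field in *; simpl; injection E as E1 E2; f_equal; lra.
Qed.

End DiscreteAnalyticPair.

Lemma discrete_laplacian_eq {h1 h2 F : Z -> Z -> R}
  (hF1 : forall u v : Z,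
      F (u + 1)%Z v - F u v =
      - det2 (h1 u (v - 1)%Z, h2 u (v - 1)%Z) (h1 u v, h2 u v))
  (hF2 : forall u v : Z,
      F u (v + 1)%Z - F u v =
      det2 (h1 (u - 1)%Z v, h2 (u - 1)%Z v) (h1 u v, h2 u v))
  (u v : Z) :
  let h := pair_field h1 h2 in
  F (u + 1)%Z v + F u (v + 1)%Z + F (u - 1)%Z v + F u (v - 1)%Z - 4 * F u v =
  - det2 (h u (v - 1)%Z) (h u v) + det2 (h (u - 1)%Z v) (h u v)
  + det2 (h (u - 1)%Z (v - 1)%Z) (h (u - 1)%Z v)
  - det2 (h (u - 1)%Z (v - 1)%Z) (h u (v - 1)%Z).
Proof.
  intros h; unfold h, pair_field.
  pose proof (hF1 (u - 1)%Z v) as left_step.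
  pose proof (hF2 u (v - 1)%Z) as down_step.
  replace (u - 1 + 1)%Z with u in left_step by ring.
  replace (v - 1 + 1)%Z with v in down_step by ring.
  pose proof (hF1 u v); pose proof (hF2 u v); lra.
Qed.

Theorem mainTheorem12
  (x y : Z -> R) (X h1 Y h2 : Z -> Z -> R) (F : Z -> Z -> R)
  (hX : discrete_analytic_extension x X h1)
  (hY : discrete_analytic_extension y Y h2)
  (hF1 : forall u v : Z,
      F (u + 1)%Z v - F u v =
      - det2 (h1 u (v - 1)%Z, h2 u (v - 1)%Z) (h1 u v, h2 u v))
  (hF2 : forall u v : Z,
      F u (v + 1)%Z - F u v =
      det2 (h1 (u - 1)%Z v, h2 (u - 1)%Z v) (h1 u v, h2 u v))
  (u v : Z) :
  let P := fun a b : Z => (X a b, Y a b) in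
  let sub := fun p q : R * R => (fst p - fst q, snd p - snd q) in
  let v1 := sub (P (u + 1)%Z v) (P u v) in
  let v2 := sub (P u (v + 1)%Z) (P u v) in
  let v3 := sub (P (u - 1)%Z v) (P u v) in
  let v4 := sub (P u (v - 1)%Z) (P u v) in
  F (u + 1)%Z v + F u (v + 1)%Z + F (u - 1)%Z v + F u (v - 1)%Z - 4 * F u v
  = det2 v3 v2 + det2 v1 v4.
Proof.
  intros P sub v1 v2 v3 v4.
  destruct hX as [aX _], hY as [aY _].
  change v1 with (vsub (P (u + 1)%Z v) (P u v)).
  change v2 with (vsub (P u (v + 1)%Z) (P u v)).
  change v3 with (vsub (P (u - 1)%Z v) (P u v)).
  change v4 with (vsub (P u (v - 1)%Z) (P u v)).
  change P with (pair_field X Y).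
  rewrite (edge_right aX aY), (edge_up aX aY), (edge_left aX aY), (edge_down aX aY).
  rewrite det2_quadrangle.
  exact (discrete_laplacian_eq hF1 hF2 u v).
Qed.
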